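(* Let $t$ be a closed $\lambda$-term. If there are a value $v$ and a reduction sequence $t\to_{\beta_v}^* v$, then there is a derivation of $\vdash t:\mathtt{n}$ (empty type context) in the silly multi type system.
   Context: $\lambda$-terms $t ::= x\mid\lambda x.t\mid tu$; values are abstractions. CbV contexts $V ::= \langle\cdot\rangle\mid tV\mid Vt$; root rule $(\lambda x.t)v\mapsto_{\beta_v} t\{x:=v\}$ for $v$ a value; $\to_{\beta_v}$ is its closure under CbV contexts. Silly multi types: linear types $L ::= \mathtt{n} \mid M\multimap L$; multi types $M ::= [L_i]_{i\in I}$ finite multisets ($\mathbf{0}$ empty, $\uplus$ sum). Type contexts $\Gamma$ map variables to multi types with finite support; $\uplus$ pointwise; $\Gamma\setminus\!\!\setminus x$ sets $x$ to $\mathbf{0}$. Judgements $\Gamma\vdash^{(m,e)} t:T$, written $\Gamma\vdash t:T$ when indices are irrelevant. Rules: (ax) $x:[L]\vdash^{(0,1)} x:L$; (many) from $(\Gamma_i\vdash^{(m_i,e_i)} t : L_i)_{i\in I}$, $I$ finite possibly empty, infer $\uplus_i\Gamma_i\vdash^{(\sum m_i,\sum e_i)} t : [L_i]_{i\in I}$; ($\mathrm{ax}_\lambda$) $\vdash^{(0,0)}\lambda x.t:\mathtt{n}$; ($\lambda$) from $\Gamma\vdash^{(m,e)}t:L$ infer $\Gamma\setminus\!\!\setminus x\vdash^{(m,e)}\lambda x.t:\Gamma(x)\multimap L$; (@) from $\Gamma\vdash^{(m,e)} t : M\multimap L$ and $\Delta\vdash^{(m',e')} u : M\uplus[\mathtt{n}]$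 infer $\Gamma\uplus\Delta\vdash^{(m+m'+1,e+e')} tu : L$. *)

From Stdlib Require Import List Arith Permutation Relations.
Import ListNotations.

Inductive term : Type :=
| Var : nat -> term
| Lam : term -> term
| App : term -> term -> term.

Definition is_value (t : term) : Prop :=
  match t with Lam _ => True | _ => False end.

Fixpoint closed_at (k : nat) (t : term) : Prop :=
  match t with
  | Var n => n < k
  | Lam b => closed_at (S k) b
  | App a b => closed_at k a /\ closed_at k b
  end.

Definition closed (t : term) : Prop := closed_at 0 t.

Fixpoint lift (d c : nat) (t : term) : term :=
  match t with
  | Var n => if n <? c then Var n else Var (n + d)
  | Lam b => Lam (lift d (S c) b)
  | App a b => App (lift d c a) (lift d c b)
  end.

Fixpoint subst_at (j : nat) (u : term) (t : term) : term :=
  match t with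
  | Var n => if n =? j then lift j 0 u
             else if j <? n then Var (pred n) else Var n
  | Lam b => Lam (subst_at (S j) u b)
  | App a b => App (subst_at j u a) (subst_at j u b)
  end.

(* t{x := v} for the bound variable of an abstraction *)
Definition subst0 (t u : term) : term := subst_at 0 u t.

Inductive step_bv : term -> term -> Prop :=
| bv_root : forall t v, is_value v -> step_bv (App (Lam t) v) (subst0 t v)
| bv_appR : forall t u u', step_bv u u' -> step_bv (App t u) (App t u')
| bv_appL : forall t t' u, step_bv t t' -> step_bv (App t u) (App t' u).

Definition steps_bv : term -> term -> Prop := clos_refl_trans term step_bv.

(* linear types L ::= n | M -o L, multi types represented by lists
   (finite multisets, identified up to permutation via [eqL]/[eqM]) *)
Inductive ltype : Type :=
| Tn : ltype
| Tarr : list ltype -> ltype -> ltype.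

Definition mtype := list ltype.

(* equality of linear types, where multisets are compared up to reordering
   (recursively): this is equality of types-with-multisets *)
Inductive eqL : ltype -> ltype -> Prop :=
| eqL_n : eqL Tn Tn
| eqL_arr : forall (M M' M'' : mtype) (L L' : ltype),
    Permutation M' M'' -> Forall2 eqL M M'' -> eqL L L' ->
    eqL (Tarr M L) (Tarr M' L').

Definition eqM (M M' : mtype) : Prop :=
  exists M'', Permutation M' M'' /\ Forall2 eqL M M''.

(* type contexts: de Bruijn index -> multi type (finite support is automatic
   for contexts produced by derivations) *)
Definition tctx := nat -> mtype.
Definition ctx_empty : tctx := fun _ => [].
Definition ctx_single (x : nat) (L : ltype) : tctx :=
  fun y => if y =? x then [L] else [].
Definition ctx_union (G D : tctx) : tctx := fun y => G y ++ D y.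
(* Γ \\ x for the abstracted variable (index 0), followed by the de Bruijn
   shift of the remaining variables *)
Definition ctx_tail (G : tctx) : tctx := fun y => G (S y).

Inductive typ : tctx -> term -> ltype -> nat -> nat -> Prop :=
| ty_ax : forall x L, typ (ctx_single x L) (Var x) L 0 1
| ty_axlam : forall t, typ ctx_empty (Lam t) Tn 0 0
| ty_lam : forall G t L m e,
    typ G t L m e -> typ (ctx_tail G) (Lam t) (Tarr (G 0) L) m e
| ty_app : forall G D t u M M' L m e m' e',
    typ G t (Tarr M L) m e ->
    typM D u M' m' e' ->
    eqM M' (M ++ [Tn]) ->
    typ (ctx_union G D) (App t u) L (m + m' + 1) (e + e')
with typM : tctx -> term -> mtype -> nat -> nat -> Prop :=
| tyM_nil : forall t, typM ctx_empty t [] 0 0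
| tyM_cons : forall G D t L M m e m' e',
    typ G t L m e -> typM D t M m' e' ->
    typM (ctx_union G D) t (L :: M) (m + m') (e + e').

(* Typability is preserved backwards along call-by-value reduction (subject
   expansion), and every value has type [n] in the empty context by (ax_λ).
   To type a redex (λx.t) v from a typing of t{x:=v}, an anti-substitution
   lemma recovers the multi type M at which the occurrences of x are used,
   together with a typing of v at M.  The application rule of the silly
   system asks for the argument at M ⊎ [n]; the extra [n] is supplied by
   (ax_λ), because the argument of a β_v-redex is a value.  Since the reduct
   of a closed term is closed, v is closed and typed in the empty context, so
   no splitting of its type context is needed. *)
From Stdlib Require Import List Arith Lia Relations FunctionalExtensionality.
Import ListNotations.

Scheme typ_mut := Induction for typ Sort Prop
  with typM_mut := Induction for typM Sort Prop.

Definition typable (G : tctx) (t : term) (L : ltype) : Prop :=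
  exists m e, typ G t L m e.

Definition typableM (G : tctx) (t : term) (M : mtype) : Prop :=
  exists m e, typM G t M m e.

Lemma closed_at_weaken t k k' : closed_at k t -> k <= k' -> closed_at k' t.
Proof.
  revert k k'; induction t as [n|b IHb|a IHa b IHb]; simpl; intros k k' Ht Hk.
  - lia.
  - apply (IHb (S k)); [assumption | lia].
  - destruct Ht; split; eauto.
Qed.

Lemma lift_closed_at t d c k : closed_at k t -> k <= c -> lift d c t = t.
Proof.
  revert c k; induction t as [n|b IHb|a IHa b IHb]; simpl; intros c k Ht Hk.
  - destruct (Nat.ltb_spec n c); [reflexivity | lia].
  - f_equal; apply (IHb (S c) (S k)); [assumption | lia].
  - destruct Ht; f_equal; eauto.
Qed.

Lemma lift_closed t d c : closed t -> lift d c t = t.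
Proof. intros Ht; apply (lift_closed_at t d c 0); [assumption | lia]. Qed.

Lemma closed_at_subst_at v t j k :
  closed v -> closed_at (S k) t -> j <= k -> closed_at k (subst_at j v t).
Proof.
  intros Hv; revert j k; induction t as [n|b IHb|a IHa b IHb]; simpl; intros j k Ht Hj.
  - destruct (Nat.eqb_spec n j).
    + rewrite lift_closed by assumption. apply (closed_at_weaken v 0); [assumption | lia].
    + destruct (Nat.ltb_spec j n); simpl; lia.
  - apply IHb; [assumption | lia].
  - destruct Ht; split; auto.
Qed.

Lemma step_bv_closed t t' : step_bv t t' -> closed t -> closed t'.
Proof.
  unfold closed; induction 1 as [t v _| |]; simpl; intros [Ha Hb].
  - apply closed_at_subst_at; [assumption | assumption | lia].
  - split; auto.
  - split; auto.
Qed.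

Definition ctx_insert (j : nat) (M : mtype) (G : tctx) : tctx :=
  fun y => if y <? j then G y else if y =? j then M else G (pred y).

Lemma ctx_insert_union j M1 M2 G D :
  ctx_insert j (M1 ++ M2) (ctx_union G D)
  = ctx_union (ctx_insert j M1 G) (ctx_insert j M2 D).
Proof.
  extensionality y; unfold ctx_insert, ctx_union.
  destruct (y <? j), (y =? j); reflexivity.
Qed.

Lemma ctx_insert_nil_empty j : ctx_insert j [] ctx_empty = ctx_empty.
Proof.
  extensionality y; unfold ctx_insert, ctx_empty.
  destruct (y <? j), (y =? j); reflexivity.
Qed.

Lemma ctx_insert_single_empty j L : ctx_insert j [L] ctx_empty = ctx_single j L.
Proof.
  extensionality y; unfold ctx_insert, ctx_single, ctx_empty.
  destruct (Nat.ltb_spec y j), (Nat.eqb_spec y j); reflexivity || lia.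
Qed.

Lemma ctx_insert_nil_single j n L : n <> j ->
  ctx_insert j [] (ctx_single (if j <? n then pred n else n) L) = ctx_single n L.
Proof.
  intros Hnj; extensionality y; unfold ctx_insert, ctx_single.
  destruct (Nat.ltb_spec j n), (Nat.ltb_spec y j), (Nat.eqb_spec y j);
    repeat match goal with |- context [?a =? ?b] => destruct (Nat.eqb_spec a b) end;
    reflexivity || lia.
Qed.

Lemma ctx_tail_insert j M G :
  ctx_tail (ctx_insert (S j) M G) = ctx_insert j M (ctx_tail G).
Proof.
  extensionality y; unfold ctx_insert, ctx_tail.
  destruct (Nat.ltb_spec (S y) (S j)), (Nat.ltb_spec y j); try lia; [reflexivity|].
  destruct (Nat.eqb_spec (S y) (S j)), (Nat.eqb_spec y j); try lia; [reflexivity|].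
  destruct y; [lia | reflexivity].
Qed.

Lemma typ_ctx_closed_at G t L m e :
  typ G t L m e -> forall k, closed_at k t -> forall y, k <= y -> G y = [].
Proof.
  revert G t L m e.
  apply (typ_mut
    (fun G t _ _ _ _ => forall k, closed_at k t -> forall y, k <= y -> G y = [])
    (fun G t _ _ _ _ => forall k, closed_at k t -> forall y, k <= y -> G y = []));
    unfold ctx_single, ctx_tail, ctx_union; simpl.
  - intros x L k Hx y Hy. destruct (Nat.eqb_spec y x); [lia | reflexivity].
  - reflexivity.
  - intros G t L m e _ IH k Ht y Hy. apply (IH (S k)); [assumption | lia].
  - intros G D t u M M' L m e m' e' _ IHt _ IHu _ k [Ht Hu] y Hy.
    rewrite (IHt k Ht y Hy), (IHu k Hu y Hy); reflexivity.
  - reflexivity.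
  - intros G D t L M m e m' e' _ IHt _ IHM k Ht y Hy.
    rewrite (IHt k Ht y Hy), (IHM k Ht y Hy); reflexivity.
Qed.

Lemma typ_closed_ctx_empty G t L m e : typ G t L m e -> closed t -> G = ctx_empty.
Proof.
  intros HT Ht; extensionality y.
  apply (typ_ctx_closed_at G t L m e HT 0); [assumption | lia].
Qed.

Lemma typM_app G D t M1 M2 m e m' e' :
  typM G t M1 m e -> typM D t M2 m' e' ->
  typM (ctx_union G D) t (M1 ++ M2) (m + m') (e + e').
Proof.
  intros H1 H2; induction H1 as [|G1 G2 t L M m1 e1 m2 e2 HL _ IH]; [exact H2|].
  replace (ctx_union (ctx_union G1 G2) D) with (ctx_union G1 (ctx_union G2 D))
    by (extensionality y; apply app_assoc).
  rewrite <- !Nat.add_assoc. constructor; [exact HL | exact (IH H2)].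
Qed.

Lemma typableM_app G D t M1 M2 :
  typableM G t M1 -> typableM D t M2 -> typableM (ctx_union G D) t (M1 ++ M2).
Proof.
  intros (m & e & H1) (m' & e' & H2). exists (m + m'), (e + e').
  apply typM_app; assumption.
Qed.

Lemma typableM_transfer t u :
  (forall G L, typable G t L -> typable G u L) ->
  forall G M, typableM G t M -> typableM G u M.
Proof.
  intros Htu G M (m & e & HM).
  induction HM as [|G D t L M mL eL mM eM HL _ IH].
  - exists 0, 0; constructor.
  - destruct (Htu G L) as (m1 & e1 & H1); [exists mL, eL; exact HL|].
    destruct (IH Htu) as (m2 & e2 & H2).
    exists (m1 + m2), (e1 + e2); constructor; assumption.
Qed.

Lemma value_typable_n v : is_value v -> typable ctx_empty v Tn.
Proof.
  destruct v as [|b|]; simpl; try contradiction; intros _.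
  exists 0, 0; constructor.
Qed.

Lemma value_typableM_n v : is_value v -> typableM ctx_empty v [Tn].
Proof.
  intros Hv; destruct (value_typable_n v Hv) as (m & e & Hn).
  exists (m + 0), (e + 0); apply (tyM_cons ctx_empty ctx_empty); [exact Hn | constructor].
Qed.

Lemma eqL_refl L : eqL L L.
Proof.
  revert L; fix IH 1; intros [|M L].
  - constructor.
  - apply eqL_arr with M; [reflexivity | | apply IH].
    induction M as [|L' M IHM]; constructor; [apply IH | exact IHM].
Qed.

Lemma eqM_refl M : eqM M M.
Proof.
  exists M; split; [reflexivity|].
  induction M; constructor; [apply eqL_refl | assumption].
Qed.

Section AntiSubstitution.

Variable v : term.
Hypothesis v_closed : closed v.

Lemma typM_anti_subst_at t j :
  (forall G L m e, typ G (subst_at j v t) L m e ->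
     exists M, typable (ctx_insert j M G) t L /\ typableM ctx_empty v M) ->
  forall D N m e, typM D (subst_at j v t) N m e ->
  exists M, typableM (ctx_insert j M D) t N /\ typableM ctx_empty v M.
Proof.
  intros IHt D N m e HN; remember (subst_at j v t) as s eqn:Es.
  induction HN as [s|G D s L N m e m' e' HL _ IHN]; subst s.
  - exists []; rewrite ctx_insert_nil_empty.
    split; exists 0, 0; constructor.
  - destruct (IHt _ _ _ _ HL) as (M1 & (m1 & e1 & H1) & Hv1).
    destruct (IHN eq_refl IHt) as (M2 & (m2 & e2 & H2) & Hv2).
    exists (M1 ++ M2); rewrite ctx_insert_union; split.
    + exists (m1 + m2), (e1 + e2); constructor; assumption.
    + apply (typableM_app ctx_empty ctx_empty); assumption.
Qed.

Lemma typ_anti_subst_at t : forall j G L m e,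
  typ G (subst_at j v t) L m e ->
  exists M, typable (ctx_insert j M G) t L /\ typableM ctx_empty v M.
Proof.
  induction t as [n|b IHb|a IHa b IHb]; intros j G L m e HT.
  - simpl in HT; destruct (Nat.eqb_spec n j) as [->|Hnj].
    + rewrite lift_closed in HT by assumption.
      rewrite (typ_closed_ctx_empty G v L m e HT v_closed) in HT |- *.
      exists [L]; rewrite ctx_insert_single_empty; split.
      * exists 0, 1; constructor.
      * exists (m + 0), (e + 0).
        apply (tyM_cons ctx_empty ctx_empty); [exact HT | constructor].
    + replace (if j <? n then Var (pred n) else Var n)
        with (Var (if j <? n then pred n else n)) in HT by (destruct (j <? n); reflexivity).
      inversion HT; subst.
      exists []; rewrite ctx_insert_nil_single by assumption.
      split; [exists 0, 1 | exists 0, 0]; constructor.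
  - inversion HT as [| | G' s L' m' e' Hb| ]; subst.
    + exists []; rewrite ctx_insert_nil_empty.
      split; exists 0, 0; constructor.
    + destruct (IHb _ _ _ _ _ Hb) as (M & (mb & eb & Hb') & Hv).
      exists M; split; [|exact Hv].
      rewrite <- ctx_tail_insert.
      exists mb, eb; exact (ty_lam _ _ _ _ _ Hb').
  - inversion HT as [| | |Ga Gb s u Ma Mb L' ma ea mb eb Ha Hb Heq]; subst.
    destruct (IHa _ _ _ _ _ Ha) as (M1 & (m1 & e1 & Ha') & Hv1).
    destruct (typM_anti_subst_at b j (IHb j) _ _ _ _ Hb) as (M2 & (m2 & e2 & Hb') & Hv2).
    exists (M1 ++ M2); rewrite ctx_insert_union; split.
    + exists (m1 + m2 + 1), (e1 + e2); econstructor; eassumption.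
    + apply (typableM_app ctx_empty ctx_empty); assumption.
Qed.

End AntiSubstitution.

Lemma typable_step_expansion t t' : step_bv t t' -> closed t ->
  forall G L, typable G t' L -> typable G t L.
Proof.
  induction 1 as [t v Hv|t u u' _ IH|t t' u _ IH]; intros [Ht Hu] G L (m & e & HT).
  - destruct (typ_anti_subst_at v Hu t 0 G L m e HT) as (M & (mt & et & Ht') & Hvm).
    destruct (typableM_app ctx_empty ctx_empty v M [Tn] Hvm (value_typableM_n v Hv))
      as (mv & ev & Hv').
    exists (mt + mv + 1), (et + ev).
    replace G with (ctx_union (ctx_tail (ctx_insert 0 M G)) ctx_empty)
      by (extensionality y; apply app_nil_r).
    eapply ty_app; [exact (ty_lam _ _ _ _ _ Ht') | exact Hv' | apply eqM_refl].
  - inversion HT as [| | |Ga Gb s w Ma Mb L' ma ea mb eb Ha Hb Heq]; subst.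
    destruct (typableM_transfer u' u (fun G L => IH Hu G L) Gb Mb)
      as (mb' & eb' & Hb'); [exists mb, eb; exact Hb|].
    exists (ma + mb' + 1), (ea + eb'); econstructor; eassumption.
  - inversion HT as [| | |Ga Gb s w Ma Mb L' ma ea mb eb Ha Hb Heq]; subst.
    destruct (IH Ht Ga (Tarr Ma L)) as (ma' & ea' & Ha'); [exists ma, ea; exact Ha|].
    exists (ma' + mb + 1), (ea' + eb); econstructor; eassumption.
Qed.

Lemma typable_steps_expansion t t' : steps_bv t t' -> closed t ->
  forall G L, typable G t' L -> typable G t L.
Proof.
  intros Hs; apply clos_rt_rt1n in Hs.
  induction Hs as [|t s t' Hstep _ IH]; intros Ht G L HT; [exact HT|].
  apply (typable_step_expansion t s Hstep Ht).
  exact (IH (step_bv_closed t s Hstep Ht) G L HT).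
Qed.

Theorem theorem7p4 (t v : term) :
  closed t -> is_value v -> steps_bv t v ->
  exists (G : tctx) (m e : nat), (forall x, G x = nil) /\ typ G t Tn m e.
Proof.
  intros Ht Hv Hs.
  destruct (typable_steps_expansion t v Hs Ht ctx_empty Tn (value_typable_n v Hv))
    as (m & e & HT).
  exists ctx_empty, m, e; split; [reflexivity | exact HT].
Qed.
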